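(* Suppose $F(i)=(i+1/2)^a$ on $[-1/2,1/2]$ for some $a>0$, and $q_1=q_2=Q$. Then for every threshold $R\in(0,1)$: (i) $\Delta_S^B=0$ if $a=1$; (ii) $\Delta_S^B<0$ if $a>1$; (iii) $\Delta_S^B>0$ if $a<1$.
   Context: Setting. Consumer types are $i\in[-1/2,1/2]$ with cumulative distribution function $F$. A product has a quality vector $(Q_1,Q_2)\in\{0,1\}^2$; a type-$i$ consumer gets payoff $(1/2+i)Q_1+(1/2-i)Q_2$. The versions $(1,1),(1,0),(0,1),(0,0)$ have prior probabilities $q_H,q_1,q_2,q_L$, all strictly positive and summing to $1$. Given a threshold $R\in(0,1)$, a sender with type drawn from $F$ gives a buy recommendation if her payoff from the product is at least $R$. Let $\phi_1(R)=1-F(R-1/2)$, $\phi_2(R)=F(1/2-R)$, $\pi^B=q_H+q_1\phi_1(R)+q_2\phi_2(R)$, and posteriors after a buy recommendation $p^B_1=q_1\phi_1(R)/\pi^B$, $p^B_2=q_2\phi_2(R)/\pi^B$. The subjective effect of the buy recommendation is $\Delta_S^B=(p_2^B-q_2)-(p_1^B-q_1)$. *)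

From Stdlib Require Import Reals.
Open Scope R_scope.

Definition Fpow (a : R) (i : R) : R :=
  if Rle_dec (i + /2) 0 then 0 else Rpower (i + /2) a.

Definition phi1 (F : R -> R) (R0 : R) : R := 1 - F (R0 - /2).
Definition phi2 (F : R -> R) (R0 : R) : R := F (/2 - R0).

Definition piB (F : R -> R) (qH q1 q2 : R) (R0 : R) : R :=
  qH + q1 * phi1 F R0 + q2 * phi2 F R0.

Definition pB1 (F : R -> R) (qH q1 q2 : R) (R0 : R) : R :=
  q1 * phi1 F R0 / piB F qH q1 q2 R0.
Definition pB2 (F : R -> R) (qH q1 q2 : R) (R0 : R) : R :=
  q2 * phi2 F R0 / piB F qH q1 q2 R0.

Definition DeltaSB (F : R -> R) (qH q1 q2 : R) (R0 : R) : R :=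
  (pB2 F qH q1 q2 R0 - q2) - (pB1 F qH q1 q2 R0 - q1).

(* With [q1 = q2 = Q] the priors cancel and [Delta_S^B = Q (phi2 - phi1) / pi^B], so its
   sign is that of [phi2 - phi1].  For [F(i) = (i + 1/2)^a] this is
   [(1 - R)^a + R^a - 1], and on [(0, 1)] the map [x |-> x^a] lies below the identity
   when [a > 1], above it when [a < 1], and is the identity when [a = 1]. *)
From Stdlib Require Import Reals Lra.
Open Scope R_scope.

Lemma Rpower_lt_base_lt1 (x y z : R) :
  0 < x < 1 -> y < z -> Rpower x z < Rpower x y.
Proof.
  intros [x_gt0 x_lt1] y_lt_z.
  assert (ln_x_lt0 : ln x < 0) by (rewrite <- ln_1; apply ln_increasing; lra).
  unfold Rpower; apply exp_increasing; nra.
Qed.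

Lemma Rpower_gt0 (x a : R) : 0 < Rpower x a.
Proof. unfold Rpower; apply exp_pos. Qed.

Lemma Rpower_lt1 (x a : R) : 0 < x < 1 -> 0 < a -> Rpower x a < 1.
Proof.
  intros x01 a_gt0; rewrite <- (Rpower_O x) by lra.
  now apply Rpower_lt_base_lt1.
Qed.

Lemma Rpower_add_compl_lt1 (x a : R) :
  0 < x < 1 -> 1 < a -> Rpower x a + Rpower (1 - x) a < 1.
Proof.
  intros x01 a_gt1.
  assert (Rpower x a < Rpower x 1) by (now apply Rpower_lt_base_lt1).
  assert (Rpower (1 - x) a < Rpower (1 - x) 1) by (apply Rpower_lt_base_lt1; lra).
  rewrite !Rpower_1 in * by lra; lra.
Qed.

Lemma Rpower_add_compl_gt1 (x a : R) :
  0 < x < 1 -> a < 1 -> 1 < Rpower x a + Rpower (1 - x) a.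
Proof.
  intros x01 a_lt1.
  assert (Rpower x 1 < Rpower x a) by (now apply Rpower_lt_base_lt1).
  assert (Rpower (1 - x) 1 < Rpower (1 - x) a) by (apply Rpower_lt_base_lt1; lra).
  rewrite !Rpower_1 in * by lra; lra.
Qed.

Lemma Fpow_in_support (a i : R) : 0 < i + /2 -> Fpow a i = Rpower (i + /2) a.
Proof.
  intros i_in; unfold Fpow.
  destruct (Rle_dec (i + /2) 0); [lra | reflexivity].
Qed.

Lemma phi1_Fpow (a R0 : R) : 0 < R0 -> phi1 (Fpow a) R0 = 1 - Rpower R0 a.
Proof.
  intros R0_gt0; unfold phi1.
  rewrite Fpow_in_support by lra.
  now replace (R0 - /2 + /2) with R0 by ring.
Qed.

Lemma phi2_Fpow (a R0 : R) : R0 < 1 -> phi2 (Fpow a) R0 = Rpower (1 - R0) a.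
Proof.
  intros R0_lt1; unfold phi2.
  rewrite Fpow_in_support by lra.
  now replace (/2 - R0 + /2) with (1 - R0) by field.
Qed.

Lemma piB_gt0 (F : R -> R) (qH q1 q2 R0 : R) :
  0 < qH -> 0 <= q1 -> 0 <= q2 -> 0 <= phi1 F R0 -> 0 <= phi2 F R0 ->
  0 < piB F qH q1 q2 R0.
Proof. intros; unfold piB; nra. Qed.

Section EqualPartialQualities.

Variables (F : R -> R) (qH Q R0 : R).

Lemma DeltaSB_equal_partial :
  DeltaSB F qH Q Q R0 = Q * (phi2 F R0 - phi1 F R0) / piB F qH Q Q R0.
Proof. unfold DeltaSB, pB1, pB2, Rdiv; ring. Qed.

Lemma DeltaSB_equal_partial_eq0 :
  phi1 F R0 = phi2 F R0 -> DeltaSB F qH Q Q R0 = 0.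
Proof.
  intros phi_eq; rewrite DeltaSB_equal_partial, phi_eq.
  unfold Rdiv; ring.
Qed.

Hypotheses (Q_gt0 : 0 < Q) (piB_pos : 0 < piB F qH Q Q R0).

Lemma DeltaSB_equal_partial_lt0 :
  phi2 F R0 < phi1 F R0 -> DeltaSB F qH Q Q R0 < 0.
Proof.
  intros phi_lt; rewrite DeltaSB_equal_partial.
  apply Rdiv_neg_pos; [nra | exact piB_pos].
Qed.

Lemma DeltaSB_equal_partial_gt0 :
  phi1 F R0 < phi2 F R0 -> 0 < DeltaSB F qH Q Q R0.
Proof.
  intros phi_lt; rewrite DeltaSB_equal_partial.
  apply Rdiv_pos_pos; [nra | exact piB_pos].
Qed.

End EqualPartialQualities.

Theorem corollary2 (a qH q1 q2 qL Q : R) :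
  0 < a ->
  0 < qH -> 0 < q1 -> 0 < q2 -> 0 < qL ->
  qH + q1 + q2 + qL = 1 ->
  q1 = Q -> q2 = Q ->
  forall R0 : R, 0 < R0 < 1 ->
    (a = 1 -> DeltaSB (Fpow a) qH q1 q2 R0 = 0) /\
    (1 < a -> DeltaSB (Fpow a) qH q1 q2 R0 < 0) /\
    (a < 1 -> 0 < DeltaSB (Fpow a) qH q1 q2 R0).
Proof.
  intros a_gt0 qH_gt0 Q_gt0 _ _ _ q1_eq q2_eq R0 R0_01; subst q1 q2.
  assert (phi1_eq := phi1_Fpow a R0 (proj1 R0_01)).
  assert (phi2_eq := phi2_Fpow a R0 (proj2 R0_01)).
  assert (piB_pos : 0 < piB (Fpow a) qH Q Q R0).
  { assert (Rpower R0 a < 1) by (now apply Rpower_lt1).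
    assert (0 < Rpower (1 - R0) a) by apply Rpower_gt0.
    apply piB_gt0; lra. }
  split; [| split]; intros a_cmp.
  - apply DeltaSB_equal_partial_eq0.
    rewrite phi1_eq, phi2_eq, a_cmp, !Rpower_1 by lra; lra.
  - apply DeltaSB_equal_partial_lt0; [exact Q_gt0 | exact piB_pos |].
    pose proof (Rpower_add_compl_lt1 R0 a R0_01 a_cmp); lra.
  - apply DeltaSB_equal_partial_gt0; [exact Q_gt0 | exact piB_pos |].
    pose proof (Rpower_add_compl_gt1 R0 a R0_01 a_cmp); lra.
Qed.
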